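(* Let $G$ be an interval graph and let $[C_1,\ldots,C_t]$ be a consecutive clique arrangement of $G$. For a vertex $v$ let $r(v)=\max\{i : v\in C_i\}$, and order the vertices of $C_1$ by nondecreasing $r(v)$ (ties broken arbitrarily). Then there exists a triangle packing of $G$ of maximum cardinality in which every vertex of $C_1$ is covered by some triangle, except possibly the first vertex, or the first two vertices, of $C_1$ in this ordering; that is, the set of uncovered vertices of $C_1$ is an initial segment of the ordering of length at most $2$.
   Context: A graph is an interval graph if it is the intersection graph of a finite collection of intervals on the real line. A consecutive clique arrangement of a graph $G$ is a linear ordering $[C_1,\ldots,C_t]$ of all maximal cliques of $G$ such that for each vertex $v$, the cliques containing $v$ are consecutive in the ordering. A triangle packing is a collection of pairwise vertex-disjoint triangles; a vertex is covered if it lies in one of these triangles. *)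

From HB Require Import structures.
From mathcomp Require Import all_boot all_order all_algebra.
Set Implicit Arguments. Unset Strict Implicit. Unset Printing Implicit Defensive.
Import Order.TTheory GRing.Theory Num.Theory.

Definition simple_graph (T : finType) (e : rel T) : Prop :=
  symmetric e /\ irreflexive e.

(* Interval graph: intersection graph of closed intervals [lo v, hi v] of the
   rationals (for a finite collection this is no loss of generality). *)
Definition interval_graph (T : finType) (e : rel T) : Prop :=
  exists lo hi : T -> rat,
    (forall v, lo v <= hi v)%R /\
    forall x y, x != y ->
      (e x y <-> (Num.max (lo x) (lo y) <= Num.min (hi x) (hi y))%R).

Definition is_clique (T : finType) (e : rel T) (C : {set T}) : bool :=
  [forall x in C, forall y in C, (x != y) ==> e x y].

Definition is_max_clique (T : finType) (e : rel T) (C : {set T}) : bool :=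
  [&& C != set0, is_clique e C &
      [forall D : {set T}, (is_clique e D && (C \subset D)) ==> (D == C)]].

(* Consecutive clique arrangement [C_1,...,C_t] stored as the list A
   (0-based indices). *)
Definition consecutive_clique_arrangement (T : finType) (e : rel T)
    (A : seq {set T}) : Prop :=
  [/\ uniq A,
      (forall C, C \in A -> is_max_clique e C),
      (forall C, is_max_clique e C -> C \in A) &
      (forall v i j k, i <= j <= k -> k < size A ->
         v \in nth set0 A i -> v \in nth set0 A k -> v \in nth set0 A j)].

Definition rmax (T : finType) (A : seq {set T}) (v : T) : nat :=
  \max_(i < size A | v \in nth set0 A i) (i : nat).

Definition is_triangle (T : finType) (e : rel T) (S : {set T}) : bool :=
  (#|S| == 3) && is_clique e S.

Definition triangle_packing (T : finType) (e : rel T) (P : {set {set T}}) : bool :=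
  [forall S in P, is_triangle e S] && trivIset P.

Definition max_triangle_packing (T : finType) (e : rel T) (P : {set {set T}}) : Prop :=
  triangle_packing e P /\
  forall Q : {set {set T}}, triangle_packing e Q -> #|Q| <= #|P|.

From HB Require Import structures.
From mathcomp Require Import all_boot all_order all_algebra.
Set Implicit Arguments. Unset Strict Implicit. Unset Printing Implicit Defensive.

(* The proof is an exchange argument.  Two facts about packings hold in any
   graph: a maximum packing leaves at most two vertices of a clique
   uncovered (three would form one more triangle), and an uncovered vertex u
   adjacent to all of a packed triangle S but v may replace v in S.  In a
   consecutive clique arrangement, two vertices v, u of C_1 with
   r(v) <= r(u) satisfy N(v) \ {u} \subseteq N(u), since u lies in every
   clique up to C_(r(u)); so a maximum packing covering v but not u can be
   traded for one covering u but not v.  Choosing a maximum packing that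
   minimizes the sum of the positions in s of the uncovered vertices of C_1,
   no such trade may move the uncovered set earlier, so it is an initial
   segment of s, of length at most 2. *)

Lemma sorted_key_index (T : eqType) (f : T -> nat) (s : seq T) u v :
  sorted (fun x y => f x <= f y) s -> u \in s -> v \in s ->
  index v s < index u s -> f v <= f u.
Proof.
move=> s_sorted us vs lt_vu.
have := sorted_leq_nth (fun y x z => @leq_trans (f y) (f x) (f z))
  (fun x => leqnn (f x)) v s_sorted.
move/(_ (index v s) (index u s)); rewrite !nth_index //.
by apply; rewrite ?inE ?index_mem // ltnW.
Qed.

Lemma down_closed_prefix (T : finType) (s : seq T) (U : {set T}) :
  uniq s -> {subset U <= s} ->
  (forall u v, u \in U -> v \in s -> index v s < index u s -> v \in U) ->
  U = [set x in take #|U| s].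
Proof.
move=> s_uniq Us down.
have card_take m : m <= size s -> #|[set x in take m s]| = m.
  by move=> ms; rewrite cardsE; move/card_uniqP: (take_uniq m s_uniq) => ->; apply: size_takel.
have U_size : #|U| <= size s.
  by move/card_uniqP: s_uniq => <-; apply/subset_leq_card/subsetP.
apply/eqP; rewrite eqEcard card_take // leqnn andbT; apply/subsetP => w wU.
have ws := Us w wU; rewrite inE in_take //.
have prefix_w : [set x in take (index w s).+1 s] \subset U.
  apply/subsetP => x; rewrite inE => xt; have xs := mem_take xt.
  move: xt; rewrite in_take // ltnS leq_eqVlt => /orP[/eqP idx_xw|]; last exact: down.
  by rewrite -(nth_index w xs) idx_xw nth_index.
by have := subset_leq_card prefix_w; rewrite card_take // index_mem.
Qed.

Section TrianglePackings.

Variables (T : finType) (e : rel T).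

Lemma is_cliqueP (C : {set T}) :
  reflect {in C &, forall x y, x != y -> e x y} (is_clique e C).
Proof.
apply: (iffP forall_inP) => [clC x y xC yC | clC x xC].
  exact/implyP/(forall_inP (clC x xC)).
by apply/forall_inP => y yC; apply/implyP; apply: clC.
Qed.

Lemma cover_setU1 (B : {set T}) (P : {set {set T}}) :
  cover (B |: P) = B :|: cover P.
Proof. by rewrite /cover bigcup_setU big_set1. Qed.

Lemma packing_set0 (P : {set {set T}}) : triangle_packing e P -> set0 \notin P.
Proof. by case/andP=> /forall_inP triP _; apply/negP=> /triP /andP[]; rewrite cards0. Qed.

Lemma packing_add (P : {set {set T}}) (X : {set T}) :
  triangle_packing e P -> is_triangle e X -> [disjoint X & cover P] ->
  triangle_packing e (X |: P) /\ #|X |: P| = #|P|.+1.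
Proof.
move=> packP triX disX; have P0 := packing_set0 packP.
case/andP: packP => /forall_inP triP trivP.
have disXB : {in P, forall B : {set T}, [disjoint X & B]}.
  by move=> B BP; apply: disjointWr disX; rewrite bigcup_sup.
have [trivXP XnP] := trivIsetU1 disXB trivP P0.
split; last by rewrite cardsU1 XnP.
apply/andP; split=> //; apply/forall_inP => B.
by case/setU1P => [->|/triP].
Qed.

Definition uncovered (C : {set T}) (P : {set {set T}}) : {set T} :=
  [set v in C | v \notin cover P].

(* A maximum packing leaves at most two vertices of any clique uncovered:
   three of them would form a further disjoint triangle. *)
Lemma uncovered_clique_le2 (P : {set {set T}}) (C : {set T}) :
  max_triangle_packing e P -> is_clique e C -> #|uncovered C P| <= 2.
Proof.
move=> [packP maxP] clC; rewrite leqNgt; apply/card_gt2P.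
move=> [x [y [z [[xU yU zU] [xy yz zx]]]]].
have XU : (x |: (y |: [set z])) \subset uncovered C P.
  by apply/subsetP => w /setU1P[->|/setU1P[->|/set1P->]].
have triX : is_triangle e (x |: (y |: [set z])).
  rewrite /is_triangle !cardsU1 cards1 !inE negb_or xy (eq_sym x) zx yz /=.
  apply/is_cliqueP => a b /(subsetP XU) aU /(subsetP XU) bU.
  move: aU bU; rewrite !inE => /andP[aC _] /andP[bC _]; by move/is_cliqueP: clC; apply.
have disX : [disjoint (x |: (y |: [set z])) & cover P].
  rewrite -setI_eq0 -subset0; apply/subsetP => w /setIP[/(subsetP XU)].
  by rewrite inE => /andP[_ /negbTE->].
have [packXP cardXP] := packing_add packP triX disX.
by have := maxP _ packXP; rewrite cardXP ltnn.
Qed.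

Lemma exists_optimal_max_packing (phi : {set {set T}} -> nat) :
  exists2 P, max_triangle_packing e P &
    forall Q, max_triangle_packing e Q -> phi P <= phi Q.
Proof.
have pack0 : triangle_packing e set0.
  by apply/andP; split; [apply/forall_inP => S; rewrite inE | apply/trivIsetP => B; rewrite inE].
have [P0 packP0 maxP0] := arg_maxnP (fun P : {set {set T}} => #|P|) pack0.
pose is_max P := triangle_packing e P &&
  [forall Q : {set {set T}}, triangle_packing e Q ==> (#|Q| <= #|P|)].
have is_maxP P : reflect (max_triangle_packing e P) (is_max P).
  apply: (iffP andP) => [] [packP maxP]; split=> //.
    by move=> Q; apply/implyP/(forallP maxP).
  by apply/forallP => Q; apply/implyP/maxP.
have max0 : is_max P0 by apply/is_maxP; split.
have [P /is_maxP maxP minP] := arg_minnP phi max0.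
by exists P => // Q /is_maxP; apply: minP.
Qed.

Hypothesis e_sym : symmetric e.

Lemma packing_swap (P : {set {set T}}) (S : {set T}) u v :
  triangle_packing e P -> S \in P -> v \in S -> u \notin cover P ->
  {in S, forall w, w != v -> e u w} ->
  [/\ triangle_packing e ((u |: (S :\ v)) |: (P :\ S)),
      #|(u |: (S :\ v)) |: (P :\ S)| = #|P| &
      cover ((u |: (S :\ v)) |: (P :\ S)) = u |: (cover P :\ v)].
Proof.
move=> packP SP vS uP adj_u; have trivP : trivIset P by case/andP: packP.
have SsubP : S \subset cover P by apply: bigcup_sup.
have uS : u \notin S by apply: contra uP; apply/subsetP.
have /andP[/eqP cardS clS] : is_triangle e S by case/andP: packP => /forall_inP/(_ S SP).
have triS' : is_triangle e (u |: (S :\ v)).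
  rewrite /is_triangle cardsU1 in_setD1 (negbTE uS) andbF.
  rewrite (cardsD1 v S) vS in cardS; rewrite -cardS eqxx /=.
  apply/is_cliqueP => a b; rewrite !inE.
  case/predU1P => [->|/andP[av aS]] /predU1P[->|/andP[bv bS]] ab.
  - by rewrite eqxx in ab.
  - exact: adj_u.
  - by rewrite e_sym; apply: adj_u.
  - by move/is_cliqueP: clS; apply.
have packPS : triangle_packing e (P :\ S).
  case/andP: packP => /forall_inP triP _; apply/andP; split; last exact: trivIsetD.
  by apply/forall_inP => B /setD1P[_ /triP].
have disS' : [disjoint u |: (S :\ v) & cover (P :\ S)].
  rewrite coverD1 // -setI_eq0 -subset0; apply/subsetP => w.
  rewrite !inE => /andP[/predU1P[->|/andP[_ wS]] /andP[wS' wP]].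
    by rewrite wP in uP.
  by rewrite wS in wS'.
have [packP' cardP'] := packing_add packPS triS' disS'.
split=> //; first by rewrite cardP' (cardsD1 S P) SP.
rewrite cover_setU1 coverD1 //; apply/setP => w; rewrite !inE.
case: (eqVneq w u) => //= _; case: (eqVneq w v) => [->|wv] /=.
  by rewrite vS.
by case: (boolP (w \in S)) => wS //=; rewrite (subsetP SsubP).
Qed.

End TrianglePackings.

(* Every nonempty clique extends to a maximal clique: take a largest clique
   containing it. *)
Lemma clique_in_max_clique (T : finType) (e : rel T) (D : {set T}) :
  is_clique e D -> D != set0 -> exists2 C, is_max_clique e C & D \subset C.
Proof.
move=> clD D0; pose extends C := is_clique e C && (D \subset C).
have extD : extends D by rewrite /extends clD subxx.
have [C /andP[clC DC] maxC] := @arg_maxnP _ D extends (fun C => #|C|) extD.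
exists C => //; apply/and3P; split=> //.
  by apply: contraNneq D0 => C0; rewrite -subset0 -C0.
apply/forallP => C'; apply/implyP => /andP[clC' CC'].
rewrite eq_sym eqEcard CC'; apply: maxC.
by rewrite /extends clC' (subset_trans DC).
Qed.

Section CliqueArrangement.

Variables (T : finType) (e : rel T) (A : seq {set T}).
Hypotheses (e_simple : simple_graph e) (A_cca : consecutive_clique_arrangement e A).

Lemma edge_in_arrangement x y : e x y ->
  exists2 i, i < size A & (x \in nth set0 A i) && (y \in nth set0 A i).
Proof.
case: e_simple A_cca => e_sym e_irr [_ _ maxA _] exy.
have cl_xy : is_clique e [set x; y].
  apply/is_cliqueP => a b /set2P[]-> /set2P[]->; rewrite ?eqxx // => _.
  by rewrite e_sym.
have xy_nonempty : [set x; y] != set0 by apply/set0Pn; exists x; rewrite set21.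
have [C /maxA CA xyC] := clique_in_max_clique cl_xy xy_nonempty.
exists (index C A); first by rewrite index_mem.
by rewrite nth_index // !(subsetP xyC) ?set21 ?set22.
Qed.

Lemma rmax_ge v i : i < size A -> v \in nth set0 A i -> i <= rmax A v.
Proof.
move=> iA vi; pose i' : 'I_(size A) := Ordinal iA.
exact: (@leq_bigmax_cond _ (fun j : 'I_(size A) => v \in nth set0 A j) (fun j => j : nat) i').
Qed.

Lemma rmax_mem v i : i < size A -> v \in nth set0 A i ->
  rmax A v < size A /\ v \in nth set0 A (rmax A v).
Proof.
move=> iA vi; have nonempty : #|[pred j : 'I_(size A) | v \in nth set0 A j]| > 0.
  by apply/card_gt0P; exists (Ordinal iA).
have [j vj rmax_j] := eq_bigmax_cond (fun j : 'I_(size A) => j : nat) nonempty.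
by rewrite /rmax rmax_j; split; first exact: ltn_ord.
Qed.

(* The edge va lies in some C_i with i <= r(v) <= r(u), and u belongs to
   every clique between C_1 and C_(r(u)). *)
Lemma first_clique_transfer u v a :
  v \in nth set0 A 0 -> u \in nth set0 A 0 -> rmax A v <= rmax A u ->
  a != u -> e v a -> e u a.
Proof.
move=> vC1 uC1 r_vu au eva.
have [i iA /andP[vi ai]] := edge_in_arrangement eva.
case: (A_cca) => _ maxA _ consA.
have [ruA u_ru] := rmax_mem (leq_ltn_trans (leq0n _) iA) uC1.
have ui : u \in nth set0 A i.
  by apply: (consA u 0 i (rmax A u)) => //; rewrite (leq_trans (rmax_ge iA vi)).
have /maxA/and3P[_ /is_cliqueP clCi _] := mem_nth set0 iA.
by apply: clCi; rewrite // eq_sym.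
Qed.

Lemma exchange_uncovered P u v :
  max_triangle_packing e P -> u \in uncovered (nth set0 A 0) P ->
  v \in nth set0 A 0 -> v \in cover P -> rmax A v <= rmax A u ->
  exists2 Q, max_triangle_packing e Q &
    uncovered (nth set0 A 0) Q = v |: (uncovered (nth set0 A 0) P :\ u).
Proof.
move=> [packP maxP]; rewrite inE => /andP[uC1 uP] vC1 vP r_vu.
have [S SP vS] := bigcupP vP.
have uS : u \notin S by apply: contra uP => uS; apply/bigcupP; exists S.
have adj_u : {in S, forall w, w != v -> e u w}.
  move=> w wS wv; apply: (first_clique_transfer vC1 uC1 r_vu).
    by apply: contraNneq uS => <-.
  have /andP[_ /is_cliqueP clS] : is_triangle e S.
    by case/andP: packP => /forall_inP/(_ S SP).
  by apply: clS; rewrite // eq_sym.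
have [packQ cardQ coverQ] := packing_swap e_simple.1 packP SP vS uP adj_u.
exists ((u |: (S :\ v)) |: (P :\ S)); first by split=> // R /maxP; rewrite cardQ.
apply/setP => w; rewrite !inE coverQ !inE.
case: (eqVneq w v) => [->|wv] /=; first by rewrite vC1 orbF; apply: contraNneq uP => <-.
by case: (eqVneq w u); rewrite ?andbF.
Qed.

End CliqueArrangement.

(* Choose, among the maximum packings, one minimizing the sum of the
   positions in s of the uncovered vertices of C_1.  At most two vertices of
   the clique C_1 are uncovered, and the uncovered ones form an initial
   segment of s: otherwise exchanging an uncovered vertex with an earlier
   covered one would lower the potential. *)
Theorem mainTheorem3 (T : finType) (e : rel T) (A : seq {set T}) (s : seq T) :
  simple_graph e ->
  interval_graph e ->
  consecutive_clique_arrangement e A ->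
  0 < size A ->
  (* s: the vertices of C_1 ordered by nondecreasing r, ties arbitrary *)
  uniq s ->
  [set x in s] = nth set0 A 0 ->
  sorted (fun x y => rmax A x <= rmax A y) s ->
  exists P : {set {set T}},
    max_triangle_packing e P /\
    exists k, k <= 2 /\
      [set v in nth set0 A 0 | v \notin cover P] = [set x in take k s].
Proof.
move=> e_simple _ A_cca A_gt0 s_uniq s_C1 s_sorted.
have inC1 x : (x \in nth set0 A 0) = (x \in s) by rewrite -s_C1 inE.
set C1 := nth set0 A 0 in inC1 *.
have [P maxP minP] :=
  exists_optimal_max_packing e (fun P => \sum_(w in uncovered C1 P) index w s).
have C1_clique : is_clique e C1.
  by case: A_cca => _ maxA _ _; case/and3P: (maxA _ (mem_nth set0 A_gt0)).
exists P; split=> //; exists #|uncovered C1 P|.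
split; first exact: uncovered_clique_le2 maxP C1_clique.
apply: down_closed_prefix => // [w|u v uU vs lt_vu].
  by rewrite inE inC1 => /andP[].
apply/negPn/negP => vU.
have vP : v \in cover P by move: vU; rewrite inE inC1 vs negbK.
have r_vu : rmax A v <= rmax A u.
  by apply: sorted_key_index s_sorted _ vs lt_vu; case/setIdP: uU; rewrite inC1.
have vC1 : v \in C1 by rewrite inC1.
have [Q maxQ UQ] := exchange_uncovered e_simple A_cca maxP uU vC1 vP r_vu.
have := minP Q maxQ; rewrite UQ big_setU1 /=; last by rewrite in_setD1 negb_and vU orbT.
by rewrite (big_setD1 u uU) /= leq_add2r leqNgt lt_vu.
Qed.
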